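(* Let $l_1,u_1,l_2,u_2$ be non-negative integers and $(f(k))$, $(g(k))$ complex sequences such that $\sum_{k=l_1}^{u_1}f(k)(1-t)^k=\sum_{k=l_2}^{u_2}g(k)t^k$ for all complex $t$. Let $s\in\mathbb{C}\setminus\mathbb{Z}^{-}$, $s\ne0$. Then \[ \sum_{k=l_1}^{u_1}\frac{f(k)}{\binom{k+s}{s}}=\sum_{k=l_2}^{u_2}\frac{g(k)s}{k+s},\qquad \sum_{k=l_1}^{u_1}\frac{f(k)}{k+1}=\sum_{k=l_2}^{u_2}\frac{g(k)}{k+1}, \] \[ \sum_{k=l_1}^{u_1}f(k)\frac{H_s-H_k}{\binom{k+s}{s}}=\sum_{k=l_2}^{u_2}g(k)\frac{s+1}{k+s}+\sum_{k=l_2}^{u_2}g(k)s\frac{H_{k+s-1}-1}{k+s}, \] \[ \sum_{k=l_1}^{u_1}f(k)\frac{1-H_k}{k+1}=\sum_{k=l_2}^{u_2}g(k)\frac{2}{k+1}+\sum_{k=l_2}^{u_2}g(k)\frac{H_k-1}{k+1}. \]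
   Context: $\mathbb{Z}^{-}$ denotes the set of negative integers. For complex $z$ not a negative integer, $H_z=\psi(z+1)+\gamma$; for integers $m\ge0$, $H_m=\sum_{j=1}^m1/j$. Binomial coefficients with complex entries: $\binom{x}{y}=\frac{\Gamma(x+1)}{\Gamma(y+1)\Gamma(x-y+1)}$. *)

From HB Require Import structures.
From mathcomp Require Import all_boot all_order all_algebra.
From mathcomp Require Export complex.
From mathcomp Require Export all_classical all_reals all_analysis.
Set Implicit Arguments. Unset Strict Implicit. Unset Printing Implicit Defensive.
Import Order.TTheory GRing.Theory Num.Theory.
Import numFieldNormedType.Exports.
Local Open Scope ring_scope.
Local Open Scope complex_scope.

HB.instance Definition _ (R : realType) :=
  NormedModule.copy R[i] (R[i] : numClosedFieldType)^o.

Definition harm (R : realType) (m : nat) : R[i] :=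
  \sum_(1 <= j < m.+1) (j%:R)^-1.

(* H_z for complex z not a negative integer: H_z = psi(z+1) + gamma,
   written via the standard series  psi(z+1) + gamma = sum_{n>=1} (1/n - 1/(n+z)). *)
Definition harmC (R : realType) (z : R[i]) : R[i] :=
  limn (series (fun n : nat => (n.+1%:R)^-1 - (n.+1%:R + z)^-1)).

(* binom(k+s, s) = Gamma(k+s+1) / (Gamma(s+1) Gamma(k+1)), k a natural number;
   by Gamma(x+1) = x Gamma(x) this is prod_{j=1}^k (s+j)/j. *)
Definition binomC (R : realType) (s : R[i]) (k : nat) : R[i] :=
  \prod_(1 <= j < k.+1) ((s + j%:R) / j%:R).

From HB Require Import structures.
From mathcomp Require Import all_boot all_order all_algebra.
From mathcomp Require Import complex.
From mathcomp Require Import all_classical all_reals all_analysis.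
From mathcomp Require Import ring lra.
Import Order.TTheory GRing.Theory Num.Theory.
Import numFieldNormedType.Exports.
Local Open Scope ring_scope.
Local Open Scope complex_scope.
Set Implicit Arguments. Unset Strict Implicit.

(* As R[i] is infinite, the hypothesis is the polynomial identity
   sum f_k (1 - X)^k = sum g_k X^k; apply to it the linear functional
   L_w : X^i |-> w i.  For w i = 1/(i + s), the moments of x^(s-1) on [0, 1],
   L_w ((1 - X)^k) is the Beta value B(s, k+1) = 1/(s binom(k+s, s)): since
   (1 - X)^(k+1) = (1 - X)^k - X (1 - X)^k and shifting the weight turns s into
   s + 1, this follows for all s at once by induction on k.  The weight
   (1/(i + s)) sum_(j < i) 1/(s + j) yields -H_k/(s binom(k+s, s)) in the same
   way.  Taking s = 1, or expanding H_(k+s-1) with H_(z+1) = H_z + 1/(z+1)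
   (valid because the series defining H_z has terms O(1/n^2)), gives the four
   identities. *)

Lemma poly_fun_inj (R : numDomainType) (p q : {poly R}) :
  (forall t, p.[t] = q.[t]) -> p = q.
Proof.
move=> pq; apply/eqP; rewrite -subr_eq0; apply: contraT => pq_neq0.
have := max_poly_roots pq_neq0 (rs := [seq i%:R | i <- iota 0 (size (p - q))]).
rewrite size_map size_iota ltnn; apply.
  by apply/allP => x _; rewrite /root hornerD hornerN pq subrr.
by rewrite map_inj_uniq ?iota_uniq // => i j /eqP; rewrite eqr_nat => /eqP.
Qed.

Section Moment.
Variable R : comNzRingType.
Implicit Types (p q : {poly R}) (w : nat -> R).

Definition moment w p := \sum_(i < size p) p`_i * w i.

Lemma momentE w p n : (size p <= n)%N -> moment w p = \sum_(i < n) p`_i * w i.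
Proof.
move=> le_pn; rewrite /moment (big_ord_widen n (fun i => p`_i * w i) le_pn).
rewrite big_mkcond; apply: eq_bigr => i _; case: ltnP => // le_pi.
by rewrite nth_default ?mul0r.
Qed.

Lemma momentD w p q : moment w (p + q) = moment w p + moment w q.
Proof.
rewrite !(@momentE w _ (maxn (size p) (size q))) ?size_polyD ?leq_maxl ?leq_maxr //.
by rewrite -big_split; apply: eq_bigr => i _; rewrite coefD mulrDl.
Qed.

Lemma momentZ w c p : moment w (c *: p) = c * moment w p.
Proof.
rewrite (@momentE w _ _ (size_scale_leq c p)) mulr_sumr.
by apply: eq_bigr => i _; rewrite coefZ mulrA.
Qed.

Lemma momentN w p : moment w (- p) = - moment w p.
Proof. by rewrite -scaleN1r momentZ mulN1r. Qed.

Lemma moment_sum w (I : Type) (r : seq I) (P : pred I) (F : I -> {poly R}) :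
  moment w (\sum_(i <- r | P i) F i) = \sum_(i <- r | P i) moment w (F i).
Proof.
by apply: big_morph; [apply: momentD | rewrite /moment size_poly0 big_ord0].
Qed.

Lemma momentXn w k : moment w 'X^k = w k.
Proof.
rewrite /moment size_polyXn big_ord_recr /= coefXn eqxx mul1r big1 ?add0r //.
by move=> i _; rewrite coefXn ltn_eqF ?mul0r.
Qed.

Lemma moment1 w : moment w 1 = w 0%N.
Proof. by rewrite -(expr0 'X) momentXn. Qed.

Lemma momentXM w p : moment w ('X * p) = moment (fun i => w i.+1) p.
Proof.
rewrite (@momentE w _ (size p).+1); last first.
  by rewrite (leq_trans (size_polyMleq _ _)) // size_polyX.
by rewrite big_ord_recl coefXM mul0r add0r; apply: eq_bigr => i _; rewrite coefXM.
Qed.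

Lemma moment_subX_exprS w k :
  moment w ((1 - 'X) ^+ k.+1) =
  moment w ((1 - 'X) ^+ k) - moment (fun i => w i.+1) ((1 - 'X) ^+ k).
Proof. by rewrite exprS mulrBl mul1r momentD momentN momentXM. Qed.

Lemma momentDw w1 w2 p :
  moment (fun i => w1 i + w2 i) p = moment w1 p + moment w2 p.
Proof. by rewrite /moment -big_split; apply: eq_bigr => i _; rewrite mulrDr. Qed.

Lemma momentZw a w p : moment (fun i => a * w i) p = a * moment w p.
Proof. by rewrite /moment mulr_sumr; apply: eq_bigr => i _; rewrite mulrCA. Qed.

End Moment.

Lemma moment_transfer (R : numDomainType) (l1 u1 l2 u2 : nat) (f g : nat -> R)
    (w h : nat -> R) :
  (forall t, \sum_(l1 <= k < u1.+1) f k * (1 - t) ^+ k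
               = \sum_(l2 <= k < u2.+1) g k * t ^+ k) ->
  (forall k, moment w ((1 - 'X) ^+ k) = h k) ->
  \sum_(l1 <= k < u1.+1) f k * h k = \sum_(l2 <= k < u2.+1) g k * w k.
Proof.
move=> fg wh.
have fgX : \sum_(l1 <= k < u1.+1) f k *: (1 - 'X) ^+ k
         = \sum_(l2 <= k < u2.+1) g k *: 'X^k :> {poly R}.
  apply: poly_fun_inj => t; rewrite !horner_sum.
  under eq_bigr do rewrite hornerZ horner_exp !hornerE.
  by rewrite fg; apply: eq_bigr => k _; rewrite hornerZ hornerXn.
under eq_bigr do rewrite -wh -momentZ.
rewrite -moment_sum fgX moment_sum.
by apply: eq_bigr => k _; rewrite momentZ momentXn.
Qed.

Section BetaMoments.
Variable R : realType.
Local Notation C := R[i].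
Implicit Types (s : C) (k : nat).

Definition nonpole s := forall n : nat, s + n%:R != 0.

Lemma nonpole_neq0 s : nonpole s -> s != 0.
Proof. by move/(_ 0%N); rewrite addr0. Qed.

Lemma nonpole_addr1 s : nonpole s -> nonpole (s + 1).
Proof. by move=> hs n; rewrite -addrA nat1r. Qed.

Lemma binomC0 s : binomC s 0 = 1.
Proof. by rewrite /binomC big_geq. Qed.

Lemma binomCS s k : binomC s k.+1 = binomC s k * ((s + k.+1%:R) / k.+1%:R).
Proof. by rewrite /binomC big_nat_recr. Qed.

Lemma binomC_addr1 s k : (s + 1) * binomC (s + 1) k = (s + k.+1%:R) * binomC s k.
Proof.
elim: k => [|k IHk]; first by rewrite !binomC0.
rewrite !binomCS mulrA IHk -addrA -natr1 [1 + _]addrC; ring.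
Qed.

Lemma binomC_neq0 s k : nonpole s -> binomC s k != 0.
Proof.
move=> hs; rewrite prodf_seq_neq0; apply/allP => j; rewrite mem_index_iota.
by case: j => // j _; rewrite mulf_neq0 ?invr_eq0 ?hs ?pnatr_eq0.
Qed.

Lemma binomC1 k : binomC (1 : C) k = k.+1%:R.
Proof.
elim: k => [|k IHk]; first by rewrite binomC0.
by rewrite binomCS IHk mulrC divfK ?nat1r // pnatr_eq0.
Qed.

Definition beta_weight s i : C := (i%:R + s)^-1.

Definition harm_weight s i : C := (i%:R + s)^-1 * \sum_(j < i) (s + j%:R)^-1.

Lemma beta_weightS s : (fun i => beta_weight s i.+1) = beta_weight (s + 1).
Proof. by apply: funext => i; rewrite /beta_weight -natr1 addrAC addrA. Qed.

Lemma harm_weightS s :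
  (fun i => harm_weight s i.+1)
  = (fun i => s^-1 * beta_weight (s + 1) i + harm_weight (s + 1) i).
Proof.
apply: funext => i; rewrite /harm_weight /beta_weight big_ord_recl addr0.
have -> : i.+1%:R + s = i%:R + (s + 1) by rewrite -natr1; ring.
rewrite mulrDr [_ * s^-1]mulrC; congr (_ + _ * _).
by apply: eq_bigr => j _; rewrite lift0 -nat1r addrA.
Qed.

Lemma harm0 : harm R 0 = 0.
Proof. by rewrite /harm big_geq. Qed.

Lemma harmS k : harm R k.+1 = harm R k + k.+1%:R^-1.
Proof. by rewrite /harm big_nat_recr. Qed.

Lemma harmE k : harm R k = \sum_(j < k) j.+1%:R^-1.
Proof. by rewrite /harm big_add1 big_mkord. Qed.

Lemma moment_beta_weight s k :
  nonpole s -> moment (beta_weight s) ((1 - 'X) ^+ k) = (s * binomC s k)^-1.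
Proof.
elim: k s => [|k IHk] s hs; first by rewrite moment1 /beta_weight binomC0 add0r mulr1.
have hs1 := nonpole_addr1 hs; have k1 : k.+1%:R != 0 :> C by rewrite pnatr_eq0.
rewrite moment_subX_exprS beta_weightS !IHk // (binomC_addr1 s k) binomCS.
by field; rewrite nat1r k1 hs (nonpole_neq0 hs) binomC_neq0.
Qed.

Lemma moment_harm_weight s k :
  nonpole s -> moment (harm_weight s) ((1 - 'X) ^+ k) = - harm R k / (s * binomC s k).
Proof.
elim: k s => [|k IHk] s hs.
  by rewrite moment1 /harm_weight big_ord0 mulr0 harm0 oppr0 mul0r.
have hs1 := nonpole_addr1 hs; have k1 : k.+1%:R != 0 :> C by rewrite pnatr_eq0.
rewrite moment_subX_exprS harm_weightS momentDw momentZw !IHk // moment_beta_weight //.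
rewrite (binomC_addr1 s k) binomCS harmS.
by field; rewrite nat1r k1 hs (nonpole_neq0 hs) binomC_neq0.
Qed.

End BetaMoments.

Section ComplexHarmonic.
Local Open Scope classical_set_scope.
Variable R : realType.
Local Notation C := R[i].
Local Notation normc := (@Normc.normc R).
Implicit Types (z : C) (u : nat -> C).

Lemma normcE z : `|z| = (normc z)%:C.
Proof. by rewrite normc_def; case: z. Qed.

Lemma normc_ge0 z : 0 <= normc z :> R.
Proof. by case: z => a b; apply: sqrtr_ge0. Qed.

Lemma normc_real (r : R) : normc r%:C = `|r|.
Proof. by rewrite /= expr0n addr0 sqrtr_sqr. Qed.

Lemma normc_nat n : normc n%:R = n%:R.
Proof. by rewrite -(rmorph_nat (real_complex R)) normc_real normr_nat. Qed.

Lemma Re_le_normc z : `|complex.Re z| <= normc z.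
Proof.
by case: z => a b; rewrite /= -sqrtr_sqr ler_sqrt ?lerDl ?addr_ge0 ?sqr_ge0.
Qed.

Lemma Im_le_normc z : `|complex.Im z| <= normc z.
Proof.
by case: z => a b; rewrite /= -sqrtr_sqr ler_sqrt ?lerDr ?addr_ge0 ?sqr_ge0.
Qed.

Lemma cvg_real_complex (x : nat -> R) (a : R) :
  x @ \oo --> a -> (fun n => (x n)%:C) @ \oo --> a%:C.
Proof.
move=> /cvgrPdist_lt xa; apply/cvgrPdist_lt => e.
rewrite ltcE /= => /andP[/eqP Ime Ree]; apply: filterS (xa _ Ree) => n.
by rewrite -rmorphB normcE normc_real ltcE /= Ime eqxx.
Qed.

Lemma cvg_complex u (a b : R) :
  (fun n => complex.Re (u n)) @ \oo --> a ->
  (fun n => complex.Im (u n)) @ \oo --> b ->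
  u @ \oo --> a%:C + 'i * b%:C.
Proof.
move=> /cvg_real_complex ua /cvg_real_complex ub.
have -> : u = fun n => (complex.Re (u n))%:C + 'i * (complex.Im (u n))%:C.
  by apply: funext => n; rewrite -complexE.
by apply: cvgD; [exact: ua | exact: cvgMl_tmp].
Qed.

(* R[i] carries no completeness instance; the real and imaginary parts do. *)
Lemma cvg_series_normc u : cvgn (series (fun n => normc (u n))) -> cvgn (series u).
Proof.
move=> cu; have part (p : C -> R) :
    (forall z, `|p z| <= normc z) -> cvgn (series (fun n => p (u n))).
  move=> hp; apply: normed_cvg; apply: (series_le_cvg _ _ _ cu) => n /=.
  - exact: normr_ge0.
  - exact: normc_ge0.
  - exact: hp.
apply/cvg_ex; eexists; apply: cvg_complex.
- have -> : (fun n => complex.Re (series u n)) = series (fun n => complex.Re (u n)).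
    by apply: funext => n; rewrite !seriesEord /= raddf_sum.
  exact: part Re_le_normc.
- have -> : (fun n => complex.Im (series u n)) = series (fun n => complex.Im (u n)).
    by apply: funext => n; rewrite !seriesEord /= raddf_sum.
  exact: part Im_le_normc.
Qed.

Definition harmC_term z (n : nat) : C := n.+1%:R^-1 - (n.+1%:R + z)^-1.

Lemma normc_harmC_term_le z n : 2 * normc z <= n.+1%:R ->
  normc (harmC_term z n) <= 4 * normc z * (n.+1%:R^-1 - n.+2%:R^-1).
Proof.
set c := normc z; set m : R := n.+1%:R => le_2c_m.
have c_ge0 : 0 <= c := normc_ge0 z.
have m_ge1 : 1 <= m by rewrite ler1n.
have ge_mc : m - c <= normc (n.+1%:R + z).
  by have := le_normcD (n.+1%:R + z) (- z); rewrite addrK normc_nat normcN -/c -/m; lra.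
have mz_neq0 : n.+1%:R + z != 0.
  by apply: contraTneq ge_mc => ->; rewrite Normc.normc0; lra.
have -> : harmC_term z n = z / (n.+1%:R * (n.+1%:R + z)).
  by rewrite /harmC_term; field; rewrite nat1r mz_neq0 pnatr_eq0.
rewrite Normc.normcM Normc.normcV Normc.normcM normc_nat -[n.+2%:R]natr1 -/c -/m.
set w := normc _ in ge_mc *.
have -> : m^-1 - (m + 1)^-1 = (m * (m + 1))^-1.
  by field; rewrite !lt0r_neq0 //; lra.
by rewrite [4 * c]mulrC -mulrA ler_wpM2l // -[4](invrK) -invfM lef_pV2 ?posrE; nra.
Qed.

Lemma harmC_series_cvg z : cvgn (series (harmC_term z)).
Proof.
apply: cvg_series_normc; set v := fun n => normc (harmC_term z n).
have v_ge0 n : 0 <= v n by exact: normc_ge0.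
have c_ge0 : 0 <= normc z := normc_ge0 z.
have [N0 le_2c_N0] : exists N0 : nat, 2 * normc z <= N0%:R.
  by exists (Num.Def.archi_bound (2 * normc z)); apply/ltW/archi_boundP; lra.
have v_nd : nondecreasing_seq (series v).
  by apply: nondecreasing_series => n _ _; exact: v_ge0.
apply: nondecreasing_is_cvgn => //; exists (series v N0 + 4 * normc z) => _ [N _ <-].
apply: le_trans (v_nd _ _ (leq_addr N0 N)) _.
rewrite series_addn lerD2l.
set d := fun k : nat => k.+1%:R^-1 : R.
apply: (@le_trans _ _ (\sum_(N0 <= k < N + N0) 4 * normc z * (d k - d k.+1))).
  apply: ler_sum_nat => k /andP[le_N0k _]; apply: normc_harmC_term_le.
  by rewrite (le_trans le_2c_N0) // ler_nat; apply: leqW.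
rewrite -mulr_sumr; under eq_bigr do rewrite -opprB.
rewrite sumrN telescope_sumr ?leq_addl // opprB.
have d_le1 : d N0 <= 1 by rewrite invf_le1 ?ler1n ?ltr0n.
have d_ge0 : 0 <= d (N + N0)%N by rewrite invr_ge0 ler0n.
nra.
Qed.

Lemma cvg_inv_natS_addr z : (fun n : nat => (n.+1%:R + z)^-1) @ \oo --> (0 : C).
Proof.
have inv_cvg0 : (fun n : nat => n.+1%:R^-1 : C) @ \oo --> 0.
  have := cvg_real_complex (@cvg_harmonic R); rewrite /harmonic.
  by under eq_fun do rewrite fmorphV rmorph_nat.
have -> : (fun n : nat => (n.+1%:R + z)^-1) = (fun n => n.+1%:R^-1) - harmC_term z.
  by apply: funext => n; rewrite !fctE /harmC_term opprB addrC subrK.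
have := cvgB inv_cvg0 (cvg_series_cvg_0 (@harmC_series_cvg z)).
by rewrite subr0; apply.
Qed.

Lemma harmC_addr1 z : harmC (z + 1) = harmC z + (z + 1)^-1.
Proof.
have shift : series (harmC_term (z + 1)) =
    series (harmC_term z) + ((fun=> (z + 1)^-1) - (fun n => (n.+1%:R + z)^-1)).
  apply: funext => n; elim: n => [|n IHn].
    by rewrite !fctE /series /= !big_geq // [1 + z]addrC subrr addr0.
  rewrite !fctE in IHn *; rewrite !seriesSr IHn /harmC_term.
  have -> : n.+1%:R + (z + 1) = n.+2%:R + z by rewrite addrA addrAC natr1.
  ring.
change (limn (series (harmC_term (z + 1))) = limn (series (harmC_term z)) + (z + 1)^-1).
have inv_cvg : ((fun=> (z + 1)^-1) - (fun n : nat => (n.+1%:R + z)^-1)) @ \oo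
    --> (z + 1)^-1 - 0 by apply: cvgB (cvg_cst _) (cvg_inv_natS_addr z).
rewrite shift limD; last 2 first.
- exact: harmC_series_cvg.
- exact: cvgP inv_cvg.
by rewrite (cvg_lim _ inv_cvg) ?subr0.
Qed.

Lemma harmC_addn z k : harmC (z + k%:R) = harmC z + \sum_(j < k) (z + j.+1%:R)^-1.
Proof.
elim: k => [|k IHk]; first by rewrite mulr0n big_ord0 !addr0.
rewrite -natr1 addrA harmC_addr1 IHk big_ord_recr /= addrA.
by rewrite -[z + _ + 1]addrA natr1.
Qed.

Lemma harmC_natr_sub1 (s : C) k :
  harmC (k%:R + s - 1) = harmC s - s^-1 + \sum_(j < k) (s + j%:R)^-1.
Proof.
have -> : harmC s = harmC (s - 1) + s^-1 by rewrite -{1}(subrK 1 s) harmC_addr1 subrK.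
rewrite addrK -addrA [k%:R + _]addrC harmC_addn; congr (_ + _).
by apply: eq_bigr => j _; rewrite -nat1r addrA subrK.
Qed.

End ComplexHarmonic.

Theorem corollary7 (R : realType) (l1 u1 l2 u2 : nat) (f g : nat -> R[i])
  (hfg : forall t : R[i],
     \sum_(l1 <= k < u1.+1) f k * (1 - t) ^+ k
     = \sum_(l2 <= k < u2.+1) g k * t ^+ k)
  (s : R[i]) (hsneg : forall n : nat, s != - (n.+1)%:R) (hs0 : s != 0) :
  [/\ \sum_(l1 <= k < u1.+1) f k / binomC s k
        = \sum_(l2 <= k < u2.+1) g k * s / (k%:R + s),
      \sum_(l1 <= k < u1.+1) f k / (k.+1)%:R
        = \sum_(l2 <= k < u2.+1) g k / (k.+1)%:R,
      \sum_(l1 <= k < u1.+1) f k * (harmC s - harm R k) / binomC s k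
        = \sum_(l2 <= k < u2.+1) g k * (s + 1) / (k%:R + s)
          + \sum_(l2 <= k < u2.+1) g k * s * (harmC (k%:R + s - 1) - 1) / (k%:R + s)
    & \sum_(l1 <= k < u1.+1) f k * (1 - harm R k) / (k.+1)%:R
        = \sum_(l2 <= k < u2.+1) g k * 2 / (k.+1)%:R
          + \sum_(l2 <= k < u2.+1) g k * (harm R k - 1) / (k.+1)%:R ].
Proof.
have hs : nonpole s by case=> [|n]; rewrite ?mulr0n ?addr0 // addr_eq0.
have h1 : nonpole (1 : R[i]) by move=> n; rewrite nat1r pnatr_eq0.
split.
- rewrite (moment_transfer hfg (w := fun i => s * beta_weight s i)) => [|k].
    by apply: eq_bigr => k _; rewrite mulrA.
  by rewrite momentZw moment_beta_weight // invfM mulVKf.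
- rewrite (moment_transfer hfg (w := beta_weight 1)) => [|k].
    by apply: eq_bigr => k _; rewrite /beta_weight natr1.
  by rewrite moment_beta_weight // mul1r binomC1.
- under eq_bigr do rewrite -mulrA.
  rewrite (moment_transfer hfg
    (w := fun i => s * (harmC s * beta_weight s i + harm_weight s i))) => [|k].
    rewrite -big_split; apply: eq_bigr => k _ /=.
    rewrite harmC_natr_sub1 /beta_weight /harm_weight.
    by field; rewrite addrC hs.
  rewrite momentZw momentDw momentZw moment_beta_weight // moment_harm_weight //.
  by field; rewrite hs0 binomC_neq0.
- under eq_bigr do rewrite -mulrA.
  rewrite (moment_transfer hfg
    (w := fun i => beta_weight 1 i + harm_weight 1 i)) => [|k].
    rewrite -big_split; apply: eq_bigr => k _ /=.
    rewrite /beta_weight /harm_weight harmE natr1; under eq_bigr do rewrite nat1r.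
    by field; rewrite nat1r pnatr_eq0.
  rewrite (momentDw (beta_weight 1) (harm_weight 1)).
  rewrite moment_beta_weight // moment_harm_weight // binomC1 mul1r.
  by field; rewrite nat1r pnatr_eq0.
Qed.
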